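(* Let $T^*_1,\dots,T^*_n$ be a sequence of releases of a dynamic dataset $T$ that is $m$-Distinct. Let $t$ be any record of $T$, with versions $t'_1,\dots,t'_I$ in these releases. Then in the feasible sub-SUG of $t$ built from these $I$ versions, every layer satisfies $|V'_i|\ge m$ for $i=1,\dots,I$.
   Context: Data model. A microdata table $T$ is published repeatedly as generalized tables $T^*_1,T^*_2,\dots$. Its records carry an identifier, quasi-identifier (QI) attributes and a sensitive attribute $S$ with a finite domain $\mathrm{dom}(S)$. Each published table partitions its records, possibly including counterfeit records, into QI-groups. If a record $t$ appears in a release, its candidate sensitive set in that release is the set of sensitive values occurring in its QI-group; this set contains $t$'s actual sensitive value. The versions of $t$ are its records in the successive releases in which it appears, listed in order: $t'_1,\dots,t'_I$, with candidate sensitive sets $C_1,\dots,C_I$. Internal updates are governed by a publicly known transition probability $P_{trans}(a,b)\ge 0$ for $a,b\in\mathrm{dom}(S)$. Sensitive attribute update graph (SUG). The SUG of $t$ has, for each $i=1,\dots,I$, a layer $V_i=\{v_{i,s}: s\in C_i\}$ with one node per value of $C_i$. There is a directed edge $(v_{i,s},v_{i+1,s'})$ exactly when $P_{trans}(s,s')>0$. Nodes and edges carry positive weights, which do not affect the feasible sub-SUG. Feasible sub-SUG. Obtain it from the SUG by repeatedly deleting a node, together with its incident edges, until no node can be deleted. A node is deleted if any of the following holds: it lies in $V_1$ and has no outgoing edge; it lies in $V_I$ and has no incoming edge; it lies in $V_i$ with $1<i<I$ and lacks an incoming edge or lacks an outgoing edge. When $I=1$, no node is deleted. Denote the remaining layers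 by $V'_i$. Definitions for $m$-Distinct. - For $a\in\mathrm{dom}(S)$, the candidate update set is $CUS(a)=\{b\in\mathrm{dom}(S): P_{trans}(a,b)>0\}$. - For a QI-group $g$ whose records have sensitive values $s_1,\dots,s_k$, its update set signature is the multiset $USS(g)=\{CUS(s_1),\dots,CUS(s_k)\}$. For a record version $t_i$, $USS(t_i)$ is the update set signature of the QI-group containing $t_i$. - A set of sensitive values $S'$ is a legal update instance of a multiset $U=\{U_1,\dots,U_k\}$ of subsets of $\mathrm{dom}(S)$ if all three of the following hold: $|S'|=k$; every $s\in S'$ lies in some $U_j$; every $U_j$ contains some $s\in S'$. - A published table is $m$-unique if every QI-group contains at least $m$ records, all with distinct sensitive values. The releases $T^*_1,\dots,T^*_n$ are $m$-Distinct if both of the following hold: 1. Each $T^*_i$ is $m$-unique. 2. Take any record $t$ and any two releases $T_i,T_j$ with $i<j$ that both contain $t$ and such that no release strictly between them contains $t$. Then the candidate sensitive set of $t_j$ is a legal update instance of $USS(t_i)$. *)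

From HB Require Import structures.
From mathcomp Require Import all_boot all_order all_algebra.
Set Implicit Arguments. Unset Strict Implicit. Unset Printing Implicit Defensive.
Import Order.TTheory GRing.Theory Num.Theory.

(* Rec : all record identifiers (records of T and counterfeit ones).   *)
(* S   : the finite domain dom(S) of the sensitive attribute.          *)
(* G   : labels of QI-groups.                                          *)
(* A published table: the set of records it contains, the sensitive    *)
(* value of each record in it, and the QI-group label of each record;  *)
(* records with the same label form one QI-group (a partition).        *)
Record release (Rec S : finType) (G : eqType) := Release {
  present : {set Rec};
  sval : Rec -> S;
  grp : Rec -> G
}.

Section Model.
Variables (Rec S : finType) (G : eqType).
Implicit Types (rel : release Rec S G) (r : Rec).

Definition qi_group rel r : {set Rec} :=
  [set r' in present rel | grp rel r' == grp rel r].

Definition cand_set rel r : {set S} :=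
  [set sval rel r' | r' in qi_group rel r].

Definition m_unique (m : nat) rel : Prop :=
  forall r, r \in present rel ->
    m <= #|qi_group rel r| /\ {in qi_group rel r &, injective (sval rel)}.

Variable (R : numDomainType) (Ptrans : S -> S -> R).

Definition CUS (a : S) : {set S} := [set b | (0 < Ptrans a b)%R].

(* Update set signature of the QI-group of r: the multiset (as a list)
   of CUS(s) for the sensitive values s of the records of the group. *)
Definition USS rel r : seq {set S} :=
  [seq CUS (sval rel r') | r' <- enum (qi_group rel r)].

Definition legal_update_instance (S' : {set S}) (U : seq {set S}) : Prop :=
  [/\ #|S'| = size U,
      (forall s, s \in S' -> exists2 Uj, Uj \in U & s \in Uj)
    & (forall Uj, Uj \in U -> exists2 s, s \in S' & s \in Uj)].

(* Releases T 0, ..., T (n-1) are m-Distinct; inT marks the records of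
   the dataset T (the others being counterfeit). *)
Definition m_distinct (m n : nat) (inT : pred Rec)
    (T : nat -> release Rec S G) : Prop :=
  (forall i, i < n -> m_unique m (T i)) /\
  (forall t, inT t -> forall i j, i < j -> j < n ->
     t \in present (T i) -> t \in present (T j) ->
     (forall k, i < k -> k < j -> t \notin present (T k)) ->
     legal_update_instance (cand_set (T j) t) (USS (T i) t)).

Definition version_idx (n : nat) (T : nat -> release Rec S G) r : seq nat :=
  [seq i <- iota 0 n | r \in present (T i)].

Definition version_cands (n : nat) (T : nat -> release Rec S G) r
  : seq {set S} :=
  [seq cand_set (T i) r | i <- version_idx n T r].

End Model.

(* SUG and feasible sub-SUG.  Layers are indexed 0..I-1 (paper: 1..I). *)
(* A (sub-)SUG is described by its node layers N : nat -> {set S}: the *)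
(* node v_{j,s} is present iff s \in N j.  Edges (v_{j,s},v_{j+1,s'})   *)
(* exist exactly when P_trans(s,s') > 0 and both nodes are present.    *)
Section SUG.
Variables (S : finType) (R : numDomainType) (Ptrans : S -> S -> R).

Definition edge (s s' : S) : bool := (0 < Ptrans s s')%R.

Definition sug_layers (C : seq {set S}) : nat -> {set S} :=
  fun j => nth set0 C j.

Definition has_out (N : nat -> {set S}) (j : nat) (s : S) : bool :=
  [exists s' in N j.+1, edge s s'].

Definition has_in (N : nat -> {set S}) (j : nat) (s : S) : bool :=
  [exists s0 in N j.-1, edge s0 s].

Definition deletable (I : nat) (N : nat -> {set S}) (j : nat) (s : S) : bool :=
  (1 < I) &&
  [|| (j == 0) && ~~ has_out N j s,
      (j == I.-1) && ~~ has_in N j s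
    | (0 < j < I.-1) && (~~ has_in N j s || ~~ has_out N j s)].

Definition del_step (I : nat) (N N' : nat -> {set S}) : Prop :=
  exists j s, [/\ j < I, s \in N j, deletable I N j s &
    forall k, N' k = if k == j then N j :\ s else N k].

Inductive del_reach (I : nat) (N : nat -> {set S}) : (nat -> {set S}) -> Prop :=
| del_refl : del_reach I N N
| del_trans N1 N2 : del_reach I N N1 -> del_step I N1 N2 -> del_reach I N N2.

Definition feasible_sub_sug (C : seq {set S}) (N : nat -> {set S}) : Prop :=
  del_reach (size C) (sug_layers C) N /\
  (forall j s, j < size C -> s \in N j -> ~~ deletable (size C) N j s).

End SUG.

From Pilot Require Import Defs.
From HB Require Import structures.
From mathcomp Require Import all_boot all_order all_algebra.

Set Implicit Arguments.
Unset Strict Implicit.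
Unset Printing Implicit Defensive.

(* Consecutive versions of t lie in releases with no release containing t
   in between, so m-Distinctness makes the candidate sets of consecutive
   versions legal updates of each other.  Legality gives every node of the
   SUG an outgoing edge into the next layer and an incoming edge from the
   previous one, hence no node of the SUG is ever deletable: the feasible
   sub-SUG is the SUG itself, and its i-th layer is the candidate set of a
   QI-group of an m-unique release, which has at least m values. *)

Lemma sorted_ltn_notin_between (s : seq nat) j k : sorted ltn s ->
  j.+1 < size s -> nth 0 s j < k < nth 0 s j.+1 -> k \notin s.
Proof.
move=> s_sorted lt_j1 /andP[lt_jk lt_kj1]; apply/negP => k_in.
have lt_j : j < size s by apply: ltnW.
have nth_k := nth_index 0 k_in.
have lt_ik : index k s < size s by rewrite index_mem.
have nth_mono := sorted_ltn_nth ltn_trans 0 s_sorted.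
case: (ltngtP (index k s) j) => [lt_ij | lt_ji | eq_ij].
- by move: (nth_mono _ _ lt_ik lt_j lt_ij); rewrite nth_k ltnNge ltnW.
- case: (ltngtP (index k s) j.+1) => [|lt_j1i | eq_ij1]; first by rewrite ltnS leqNgt lt_ji.
  + by move: (nth_mono _ _ lt_j1 lt_ik lt_j1i); rewrite nth_k ltnNge ltnW.
  + by move: lt_kj1; rewrite -eq_ij1 nth_k ltnn.
- by move: lt_jk; rewrite -eq_ij nth_k ltnn.
Qed.

Section Versions.
Variables (Rec S : finType) (G : eqType) (n : nat) (T : nat -> release Rec S G).
Variable t : Rec.

Local Notation idx := (version_idx n T t).

Lemma mem_version_idx k : (k \in idx) = (k < n) && (t \in present (T k)).
Proof. by rewrite mem_filter mem_iota add0n andbC. Qed.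

Lemma version_idx_sorted : sorted ltn idx.
Proof. by apply: sorted_filter; [exact: ltn_trans | exact: iota_ltn_sorted]. Qed.

Lemma nth_version_idx j : j < size idx ->
  nth 0 idx j < n /\ t \in present (T (nth 0 idx j)).
Proof. by move=> lt_j; apply/andP; rewrite -mem_version_idx mem_nth. Qed.

Lemma version_idx_consecutive j k : j.+1 < size idx ->
  nth 0 idx j < k < nth 0 idx j.+1 -> t \notin present (T k).
Proof.
move=> lt_j1 bnd; apply/negP => t_k.
have [lt_n _] := nth_version_idx lt_j1.
have lt_kn : k < n by case/andP: bnd => _ /ltn_trans; apply.
have := sorted_ltn_notin_between version_idx_sorted lt_j1 bnd.
by rewrite mem_version_idx lt_kn t_k.
Qed.

Lemma nth_version_cands j : j < size idx ->
  nth set0 (version_cands n T t) j = cand_set (T (nth 0 idx j)) t.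
Proof. by move=> lt_j; rewrite (nth_map 0). Qed.

End Versions.

Section Legality.
Variables (Rec S : finType) (G : eqType) (R : numDomainType) (Ptrans : S -> S -> R).
Implicit Types (rel : release Rec S G) (r : Rec).

Lemma legal_update_succ rel r (S' : {set S}) :
  legal_update_instance S' (USS Ptrans rel r) ->
  forall s, s \in cand_set rel r -> exists2 s', s' \in S' & edge Ptrans s s'.
Proof.
case=> _ _ hit _ /imsetP[r' r'_in ->].
have [s' s'_in] := hit _ (map_f _ (etrans (mem_enum _ _) r'_in)).
by rewrite inE; exists s'.
Qed.

Lemma legal_update_pred rel r (S' : {set S}) :
  legal_update_instance S' (USS Ptrans rel r) ->
  forall s', s' \in S' -> exists2 s, s \in cand_set rel r & edge Ptrans s s'.
Proof.
case=> _ cover _ s' /cover[_ /mapP[r' r'_in ->]].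
rewrite mem_enum in r'_in; rewrite inE => e.
by exists (Defs.sval rel r'); first exact: imset_f.
Qed.

Lemma m_unique_card_cand_set m rel r :
  m_unique m rel -> r \in present rel -> m <= #|cand_set rel r|.
Proof. by move=> uniq_rel /uniq_rel[card_grp inj]; rewrite card_in_imset. Qed.

Lemma m_distinct_consecutive_versions m n inT (T : nat -> release Rec S G) t :
  m_distinct Ptrans m n inT T -> inT t ->
  forall j, j.+1 < size (version_idx n T t) ->
  legal_update_instance (cand_set (T (nth 0 (version_idx n T t) j.+1)) t)
    (USS Ptrans (T (nth 0 (version_idx n T t) j)) t).
Proof.
move=> [_ legal] tT j lt_j1.
have [_ t_j] := nth_version_idx (ltnW lt_j1).
have [lt_n t_j1] := nth_version_idx lt_j1.
have lt_idx := sorted_ltn_nth ltn_trans 0 (version_idx_sorted n T t).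
apply: legal tT _ _ _ lt_n t_j t_j1 _; first by apply: lt_idx => //; exact: ltnW.
by move=> k lo hi; apply: version_idx_consecutive lt_j1 _; rewrite lo hi.
Qed.

End Legality.

Section FeasibleSubSUG.
Variables (S : finType) (R : numDomainType) (Ptrans : S -> S -> R).

Lemma not_deletable I (N : nat -> {set S}) j s : j < I ->
  (j < I.-1 -> has_out Ptrans N j s) -> (0 < j -> has_in Ptrans N j s) ->
  ~~ deletable Ptrans I N j s.
Proof.
move=> lt_jI out in_; apply/negP => /andP[lt_1I].
have lt_0I1 : 0 < I.-1 by rewrite -ltnS prednK // ltnW.
case/or3P => /andP[].
- by move/eqP=> j0; rewrite out // j0.
- by move/eqP=> jI; rewrite in_ // jI.
- by case/andP=> j_gt0 j_lt; rewrite out // in_.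
Qed.

Lemma del_reach_stable I (N0 N : nat -> {set S}) :
  (forall j s, j < I -> s \in N0 j -> ~~ deletable Ptrans I N0 j s) ->
  del_reach Ptrans I N0 N -> N = N0.
Proof.
move=> stable; elim=> // N1 N2 _ -> [j [s [lt_j s_in del _]]].
by move: (stable _ _ lt_j s_in); rewrite del.
Qed.

Lemma feasible_sub_sug_linked (C : seq {set S}) N :
  (forall j, j.+1 < size C ->
     (forall s, s \in nth set0 C j -> exists2 s', s' \in nth set0 C j.+1 & edge Ptrans s s')
  /\ (forall s', s' \in nth set0 C j.+1 -> exists2 s, s \in nth set0 C j & edge Ptrans s s')) ->
  feasible_sub_sug Ptrans C N -> N = sug_layers C.
Proof.
move=> linked [reach _]; apply: del_reach_stable reach => j s lt_j s_in.
apply: not_deletable => // [lt_j1 | j_gt0].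
- have lt_sj : j.+1 < size C by rewrite -ltn_predRL.
  have [succ _] := linked j lt_sj.
  by have [s' s'_in e] := succ s s_in; apply/existsP; exists s'; rewrite s'_in.
- have lt_pj : j.-1.+1 < size C by rewrite prednK.
  have [_ pred] := linked j.-1 lt_pj; rewrite prednK // in pred.
  by have [s0 s0_in e] := pred s s_in; apply/existsP; exists s0; rewrite s0_in.
Qed.

End FeasibleSubSUG.

Theorem lemma3 (Rec S : finType) (G : eqType) (R : numDomainType)
  (Ptrans : S -> S -> R) (Ptrans_ge0 : forall a b, (0 <= Ptrans a b)%R)
  (m n : nat) (inT : pred Rec) (T : nat -> release Rec S G)
  (Hdist : m_distinct Ptrans m n inT T)
  (t : Rec) (Ht : inT t) (N : nat -> {set S}) :
  feasible_sub_sug Ptrans (version_cands n T t) N ->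
  forall i, i < size (version_cands n T t) -> m <= #|N i|.
Proof.
move=> feasible; have size_cands : size (version_cands n T t) = size (version_idx n T t).
  by rewrite size_map.
rewrite size_cands => i lt_i.
rewrite (feasible_sub_sug_linked _ feasible) => [|j lt_j1]; last first.
  rewrite size_cands in lt_j1; rewrite !nth_version_cands // ?(ltnW lt_j1) //.
  have legal := m_distinct_consecutive_versions Hdist Ht lt_j1.
  by split; [apply: legal_update_succ legal | apply: legal_update_pred legal].
have [lt_n t_i] := nth_version_idx lt_i.
rewrite /sug_layers nth_version_cands //.
exact: m_unique_card_cand_set (Hdist.1 _ lt_n) t_i.
Qed.
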